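(* Let $R$ be a ring and $x\in R$ a nonunit. Then $x$ is a parameter on $R$ if and only if $\operatorname{ht}xR\ge1$ and $(0:x^n)=(0:x^{n+1})$ for some $n\ge1$.
   Context: All rings are commutative with identity. A parameter on $R$ is a parameter sequence of length one: an element $x$ such that (1) $x$ is weakly proregular, meaning there is $n\ge1$ with $(0:_Rx^n)=(0:_Rx^{n+1})$ (equivalently, for every $n$ there is $m\ge n$ such that the map $(0:_Rx^m)\to(0:_Rx^n)$, $r\mapsto x^{m-n}r$, is zero), (2) $xR\neq R$, and (3) $H^1_x(R)_p\neq0$ for all primes $p\supseteq xR$, where $H^1_x(R)=R_x/\operatorname{im}(R\to R_x)$. *)

From HB Require Import structures.
From mathcomp Require Import all_boot all_order all_algebra.
Set Implicit Arguments. Unset Strict Implicit. Unset Printing Implicit Defensive.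
Import GRing.Theory.
Local Open Scope ring_scope.

Section Defs.
Variable R : comPzRingType.

Definition is_ideal (I : R -> Prop) : Prop :=
  I 0 /\ (forall a b, I a -> I b -> I (a + b)) /\ (forall r a, I a -> I (r * a)).

Definition is_prime (P : R -> Prop) : Prop :=
  is_ideal P /\ ~ P 1 /\ (forall a b, P (a * b) -> P a \/ P b).

Definition ideal_sub (I J : R -> Prop) : Prop := forall a, I a -> J a.

Definition principal (x : R) : R -> Prop := fun y => exists r, y = x * r.

Definition is_unit (x : R) : Prop := exists y, x * y = 1.

Definition ann (a : R) : R -> Prop := fun r => a * r = 0.

Definition weakly_proregular (x : R) : Prop :=
  exists n : nat, (1 <= n)%N /\ (forall r, ann (x ^+ n) r <-> ann (x ^+ n.+1) r).

Definition prime_height_ge1 (P : R -> Prop) : Prop :=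
  exists Q, is_prime Q /\ ideal_sub Q P /\ ~ ideal_sub P Q.

(* ht I >= 1: every prime containing I has height >= 1
   (ht I = inf of heights of primes containing I). *)
Definition ideal_height_ge1 (I : R -> Prop) : Prop :=
  forall P, is_prime P -> ideal_sub I P -> prime_height_ge1 P.

(* Localization R_x: the element r / x^k is represented by the pair (r, k);
   r/x^k = r'/x^k' in R_x iff x^m (r x^k' - r' x^k) = 0 for some m. *)
Definition Rx_eq (x : R) (r : R) (k : nat) (r' : R) (k' : nat) : Prop :=
  exists m : nat, x ^+ m * (r * x ^+ k' - r' * x ^+ k) = 0.

Definition Rx_in_image (x r : R) (k : nat) : Prop :=
  exists a : R, Rx_eq x r k a 0.

(* H^1_x(R) = R_x / im(R -> R_x): the class of r/x^k is zero iff r/x^k is in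
   the image. The R-module structure: s . [r/x^k] = [(s r)/x^k]. *)
Definition H1_zero (x r : R) (k : nat) : Prop := Rx_in_image x r k.

(* H^1_x(R)_P <> 0: some element [r/x^k] / t of the localization at P is
   nonzero, i.e. no u outside P kills [r/x^k]. *)
Definition H1_loc_nonzero (x : R) (P : R -> Prop) : Prop :=
  exists (r : R) (k : nat), ~ (exists u : R, ~ P u /\ H1_zero x (u * r) k).

(* x is a parameter on R (parameter sequence of length one). *)
Definition parameter (x : R) : Prop :=
  weakly_proregular x /\
  (exists r, ~ principal x r) /\
  (forall P, is_prime P -> ideal_sub (principal x) P -> H1_loc_nonzero x P).

End Defs.

From mathcomp Require Import all_boot all_order all_algebra.
From mathcomp Require Import boolp classical_sets ring.
Set Implicit Arguments.
Unset Strict Implicit.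

Import GRing.Theory.
Local Open Scope classical_set_scope.
Local Open Scope ring_scope.

(* For a prime P containing x, H^1_x(R)_P <> 0 exactly when x is not nilpotent
   in R_P, i.e. when no v outside P is killed by a power of x.  If x is not
   nilpotent in R_P, an ideal of R maximal among those disjoint from the
   multiplicative set (R \ P) x^N is a prime inside P missing x, so ht P >= 1.
   Conversely, if v x^m = 0 with v outside P, then every minimal prime Q
   inside P contains x, so Q is a prime of height 0 containing xR. *)

Lemma ZL_preorder_in (T : Type) (P : set T) (le : T -> T -> Prop) :
  (forall t, le t t) -> (forall r s t, le r s -> le s t -> le r t) ->
  P !=set0 ->
  (forall A, A `<=` P -> A !=set0 -> total_on A le ->
     exists2 t, P t & forall s, A s -> le s t) ->
  exists2 t, P t & forall s, P s -> le t s -> le s t.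
Proof.
move=> refl_le trans_le [t0 Pt0] ub.
pose U := {t | P t}.
pose leU : rel U := fun s t => `[< le (sval s) (sval t) >].
have [| | |[t Pt] tmax] := @ZL_preorder U (exist _ t0 Pt0) leU.
- by move=> t; apply/asboolP.
- by move=> r s t /asboolP rs /asboolP st; apply/asboolP; exact: trans_le rs st.
- move=> A Atot; have [[s0 As0]|A0] := pselect (exists s, A s); last first.
    by exists (exist _ t0 Pt0) => s As; case: A0; exists s.
  have [|||t Pt tub] := ub [set sval s | s in A].
  + by move=> _ [s _ <-]; exact: svalP.
  + by exists (sval s0), s0.
  + move=> _ _ [s As <-] [s' As' <-].
    by have [/asboolP|/asboolP] := Atot _ _ As As'; [left|right].
  + by exists (exist _ t Pt) => s As; apply/asboolP/tub; exists s.
- by exists t => // s Ps ts; exact/asboolP/(tmax (exist _ s Ps))/asboolP.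
Qed.

Section Ideals.
Variable R : comPzRingType.
Implicit Types (x : R) (I P Q S : set R).

Lemma ideal0 I : is_ideal I -> I 0.
Proof. by case. Qed.

Lemma idealD I a b : is_ideal I -> I a -> I b -> I (a + b).
Proof. by move=> [_ [ID _]]; exact: ID. Qed.

Lemma idealMl I r a : is_ideal I -> I a -> I (r * a).
Proof. by move=> [_ [_ IM]]; exact: IM. Qed.

Lemma idealMr I a r : is_ideal I -> I a -> I (a * r).
Proof. by rewrite mulrC; exact: idealMl. Qed.

Lemma ideal_zero : is_ideal [set 0 : R].
Proof.
split; first by [].
by split=> [a b -> ->|r a ->]; rewrite ?addr0 ?mulr0.
Qed.

Lemma principal_self x : principal x x.
Proof. by exists 1; rewrite mulr1. Qed.

Lemma principal_sub I x : is_ideal I -> I x -> ideal_sub (principal x) I.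
Proof. by move=> Iid Ix _ [r ->]; exact: idealMr. Qed.

Lemma prime_expr P x m : is_prime P -> P (x ^+ m) -> P x.
Proof.
move=> [_ [P1 Pmul]]; elim: m => [|m IHm]; first by rewrite expr0.
by rewrite exprS => /Pmul [|/IHm].
Qed.

Lemma ideal_bigcup (F : set (set R)) :
  F !=set0 -> F `<=` @is_ideal R -> total_on F subset ->
  is_ideal (\bigcup_(I in F) I).
Proof.
move=> [I0 FI0] Fid Ftot; split; [|split].
- by exists I0 => //; exact: ideal0 (Fid _ FI0).
- move=> a b [I FI Ia] [J FJ Jb].
  have [IJ|JI] := Ftot _ _ FI FJ.
  + by exists J => //; exact: idealD (Fid _ FJ) (IJ _ Ia) Jb.
  + by exists I => //; exact: idealD (Fid _ FI) Ia (JI _ Jb).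
- by move=> r a [I FI Ia]; exists I => //; exact: idealMl (Fid _ FI) Ia.
Qed.

Lemma prime_bigcap (F : set (set R)) :
  F !=set0 -> F `<=` @is_prime R -> total_on F subset ->
  is_prime (\bigcap_(Q in F) Q).
Proof.
move=> [Q0 FQ0] Fpr Ftot; split; [split; [|split]|split].
- by move=> Q FQ; exact: ideal0 (Fpr _ FQ).1.
- by move=> a b Fa Fb Q FQ; exact: idealD (Fpr _ FQ).1 (Fa _ FQ) (Fb _ FQ).
- by move=> r a Fa Q FQ; exact: idealMl (Fpr _ FQ).1 (Fa _ FQ).
- by move=> F1; have [_ [Q01 _]] := Fpr _ FQ0; exact: Q01 (F1 _ FQ0).
- move=> a b Fab; apply: contrapT => /not_orP [].
  move=> /existsNP [Q1 /not_implyP [FQ1 nQ1a]] /existsNP [Q2 /not_implyP [FQ2 nQ2b]].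
  have Qab Q : F Q -> Q a \/ Q b.
    by move=> FQ; have [_ [_ Qmul]] := Fpr _ FQ; exact: Qmul _ _ (Fab _ FQ).
  have [Q12|Q21] := Ftot _ _ FQ1 FQ2.
  + by case: (Qab _ FQ1) => [//|/Q12].
  + by case: (Qab _ FQ2) => [/Q21|].
Qed.

Lemma exists_minimal_prime P : is_prime P ->
  exists Q, [/\ is_prime Q, ideal_sub Q P &
    forall Q', is_prime Q' -> ideal_sub Q' Q -> ideal_sub Q Q'].
Proof.
move=> Pp.
have [||||Q [Qp QP] Qmin] := @ZL_preorder_in _ [set Q | is_prime Q /\ ideal_sub Q P]
    (fun Q Q' => ideal_sub Q' Q).
- by move=> Q a.
- by move=> Q1 Q2 Q3 Q21 Q32 a /Q32 /Q21.
- by exists P; split=> // a.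
- move=> F FP [Q0 FQ0] Ftot; exists (\bigcap_(Q in F) Q).
  + split.
      apply: prime_bigcap; [by exists Q0 | by move=> Q FQ; case: (FP _ FQ) |].
      by move=> Q1 Q2 FQ1 FQ2; case: (Ftot _ _ FQ1 FQ2); [right|left].
    by move=> a Fa; apply: (FP _ FQ0).2; exact: Fa.
  + by move=> Q FQ a Fa; exact: Fa.
- exists Q; split=> // Q' Q'p Q'Q; apply: Qmin => //.
  by split=> // a /Q'Q /QP.
Qed.

Definition multiplicative S := S 1 /\ forall s t, S s -> S t -> S (s * t).

Lemma ideal_add_principal Q a : is_ideal Q ->
  is_ideal (fun y => exists i r, Q i /\ y = i + a * r).
Proof.
move=> Qid; split; [|split].
- by exists 0, 0; rewrite mulr0 addr0; split=> //; exact: ideal0.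
- move=> _ _ [i [r [Qi ->]]] [j [t [Qj ->]]]; exists (i + j), (r + t).
  by split; [exact: idealD | ring].
- move=> t _ [i [r [Qi ->]]]; exists (t * i), (t * r).
  by split; [exact: idealMl | ring].
Qed.

Lemma maximal_disjoint_prime S Q : multiplicative S ->
  is_ideal Q -> (forall s, Q s -> ~ S s) ->
  (forall I, is_ideal I -> (forall s, I s -> ~ S s) -> ideal_sub Q I ->
     ideal_sub I Q) ->
  is_prime Q.
Proof.
move=> [S1 SM] Qid QS Qmax; split=> //; split; first by move=> /QS.
have meets a : ~ Q a -> exists2 s, S s & exists i r, Q i /\ s = i + a * r.
  move=> nQa; apply: contrapT => nmeet; apply: nQa.
  apply: (Qmax _ (ideal_add_principal a Qid)).
  - by move=> s Js Ss; apply: nmeet; exists s.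
  - by move=> y Qy; exists y, 0; rewrite mulr0 addr0.
  - by exists 0, 1; rewrite mulr1 add0r; split=> //; exact: ideal0.
move=> a b Qab; apply: contrapT => /not_orP [].
move=> /meets [s Ss [i [r [Qi es]]]] /meets [t St [j [u [Qj et]]]].
apply: (QS (s * t)) (SM _ _ Ss St).
have -> : s * t = i * t + (a * r * j + a * b * (r * u)) by rewrite es et; ring.
apply: (idealD Qid); first exact: idealMr.
by apply: (idealD Qid); [exact: idealMl | exact: idealMr].
Qed.

Lemma exists_prime_disjoint S : multiplicative S -> ~ S 0 ->
  exists Q, is_prime Q /\ forall s, Q s -> ~ S s.
Proof.
move=> Smul S0.
have [||||Q [Qid QS] Qmax] := @ZL_preorder_in _
    [set I | is_ideal I /\ forall s, I s -> ~ S s] (@ideal_sub R).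
- by move=> I a.
- by move=> I1 I2 I3 I12 I23 a /I12 /I23.
- by exists [set 0]; split; [exact: ideal_zero | move=> s ->].
- move=> F FD Fn Ftot; exists (\bigcup_(I in F) I).
  + split; first by apply: ideal_bigcup => // I FI; case: (FD _ FI).
    by move=> s [I FI Is]; apply: (FD _ FI).2.
  + by move=> I FI a Ia; exists I.
- exists Q; split=> //; apply: maximal_disjoint_prime Smul Qid QS _ => I Iid IS.
  exact: Qmax.
Qed.

(* x / 1 is nilpotent in the localization R_P. *)
Definition loc_nilpotent x P := exists v m, ~ P v /\ v * x ^+ m = 0.

Lemma H1_loc_nonzeroP x P : is_ideal P -> P x ->
  H1_loc_nonzero x P <-> ~ loc_nilpotent x P.
Proof.
move=> Pid Px; split.
- move=> [r [k nH1]] [v [m [Pv vx]]]; apply: nH1; exists v; split=> //.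
  exists 0, m.
  by rewrite expr0 mulr1 mul0r subr0 mulrA (mulrC _ v) vx mul0r.
- move=> nnil; exists 1, 1%N => -[u [Pu [a [m e]]]]; apply: nnil.
  exists (u - a * x), m; split.
  + move=> Pv; apply: Pu; rewrite -(subrK (a * x) u).
    by apply: (idealD Pid Pv); exact: idealMl.
  + by move: e; rewrite expr0 expr1 !mulr1 mulrC.
Qed.

Lemma loc_nilpotent_prime x P Q : is_prime Q -> ideal_sub Q P ->
  loc_nilpotent x P -> Q x.
Proof.
move=> Qp QP [v [m [Pv vx]]].
have /Qp.2.2 [/QP //|Qxm] : Q (v * x ^+ m) by rewrite vx; exact: ideal0 Qp.1.
exact: prime_expr Qp Qxm.
Qed.

Lemma exists_prime_sub_avoid x P : is_prime P -> ~ loc_nilpotent x P ->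
  exists Q, [/\ is_prime Q, ideal_sub Q P & ~ Q x].
Proof.
move=> [_ [P1 Pmul]] nnil.
pose S := [set s | exists v m, ~ P v /\ s = v * x ^+ m].
have Smul : multiplicative S.
  split; first by exists 1, 0%N; rewrite expr0 mulr1.
  move=> _ _ [v [m [Pv ->]]] [w [n [Pw ->]]]; exists (v * w), (m + n)%N.
  by split; [case/Pmul | rewrite exprD mulrACA].
have S0 : ~ S 0 by move=> [v [m [Pv vx]]]; apply: nnil; exists v, m.
have [Q [Qp QS]] := exists_prime_disjoint Smul S0.
exists Q; split=> //.
- move=> a Qa; apply: contrapT => Pa; apply: (QS a) => //.
  by exists a, 0%N; rewrite expr0 mulr1.
- by move=> Qx; apply: (QS x) => //; exists 1, 1%N; rewrite expr1 mul1r.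
Qed.

Lemma height_ge1_principalP x :
  ideal_height_ge1 (principal x) <->
  forall P, is_prime P -> ideal_sub (principal x) P -> ~ loc_nilpotent x P.
Proof.
split.
- move=> ht P Pp _ nil.
  have [Q [Qp QP Qmin]] := exists_minimal_prime Pp.
  have Qx := loc_nilpotent_prime Qp QP nil.
  have [Q' [Q'p [Q'Q nQQ']]] := ht Q Qp (principal_sub Qp.1 Qx).
  exact: nQQ' (Qmin _ Q'p Q'Q).
- move=> nnil P Pp sxP.
  have [Q [Qp QP nQx]] := exists_prime_sub_avoid Pp (nnil P Pp sxP).
  exists Q; split=> //; split=> // PQ.
  exact: nQx (PQ _ (sxP _ (principal_self x))).
Qed.

End Ideals.

Theorem corollary3p4 (R : comPzRingType) (x : R) (hx : ~ is_unit x) :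
  parameter x <->
  (ideal_height_ge1 (principal x) /\
   exists n : nat, (1 <= n)%N /\ (forall r : R, ann (x ^+ n) r <-> ann (x ^+ n.+1) r)).
Proof.
have H1P P : is_prime P -> ideal_sub (principal x) P ->
    H1_loc_nonzero x P <-> ~ loc_nilpotent x P.
  by move=> Pp sxP; apply: H1_loc_nonzeroP Pp.1 (sxP _ (principal_self x)).
rewrite height_ge1_principalP; split.
- move=> [wpr [_ H1]]; split=> // P Pp sxP; exact/(H1P _ Pp sxP)/H1.
- move=> [nnil wpr]; split=> //; split.
  + by exists 1 => -[r r1]; apply: hx; exists r.
  + by move=> P Pp sxP; exact/(H1P _ Pp sxP)/nnil.
Qed.
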